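(* Let $f:\{-1,1\}^k\to\{0,1\}$, $\delta\in(0,1)$, $\zeta\in\mathcal{C}_\delta(f)$, and let $\zeta'=\zeta_{S,\pi,b}$ for an arbitrary nonempty $S\subseteq[k]$, permutation $\pi$ of $S$ and $b\in\{-1,1\}^{|S|}$. Let $\Sigma$ be the $|S|\times|S|$ covariance matrix with $\Sigma_{ij}=\zeta'(i,j)-\zeta'(0,i)\zeta'(0,j)$. Then $\Sigma$ is positive semidefinite with all eigenvalues at least $\delta$.
   Context: $\mathcal{C}(f)$ is the set of symmetric $(k+1)\times(k+1)$ moment matrices $\zeta(\nu)$ (indices $0..k$: $\zeta(i,i)=1$, $\zeta(0,i)=\mathbb{E}_\nu x_i$, $\zeta(i,j)=\mathbb{E}_\nu x_ix_j$ for $i\ne j$) of distributions $\nu$ on $f^{-1}(1)$, and $\mathcal{C}_\delta(f)=\{(1-\delta)\zeta+\delta I_{k+1}:\zeta\in\mathcal{C}(f)\}$. $\zeta_{S,\pi,b}$ is the submatrix on rows/columns $\{0\}\cup S$ with $S$-coordinates permuted by $\pi$, multiplied entrywise by $(1\ b)(1\ b)^T$; its rows/columns other than $0$ are indexed $1,\dots,|S|$. *)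

From HB Require Import structures.
From mathcomp Require Import all_boot all_order all_algebra all_fingroup.
Set Implicit Arguments. Unset Strict Implicit. Unset Printing Implicit Defensive.
Import Order.TTheory GRing.Theory Num.Theory.
Local Open Scope ring_scope.

(* Hypercube {-1,1}^k : points are x : {ffun 'I_k -> bool}; the boolean
   b encodes the sign (-1)^b, i.e. true <-> -1, false <-> 1. *)
Definition sgnb {R : nzRingType} (b : bool) : R := if b then -1 else 1.

Definition cube (k : nat) := {ffun 'I_k -> bool}.

(* The coordinates 0..k of a point: coordinate 0 is the constant 1,
   coordinate i+1 is x_i (as a +-1 real). *)
Definition ext_pt {R : nzRingType} (k : nat) (x : cube k) (i : 'I_k.+1) : R :=
  match unlift ord0 i with None => 1 | Some j => sgnb (x j) end.

Definition distr_on {R : realFieldType} (k : nat) (f : cube k -> bool)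
    (nu : {ffun cube k -> R}) : Prop :=
  (forall x, 0 <= nu x) /\ (\sum_x nu x = 1) /\ (forall x, ~~ f x -> nu x = 0).

(* moment matrix zeta(nu): 1 on the diagonal, E[x_i] on row/column 0,
   E[x_i x_j] elsewhere *)
Definition moment_mx {R : realFieldType} (k : nat) (nu : {ffun cube k -> R})
  : 'M[R]_k.+1 :=
  \matrix_(i, j) if i == j then 1
                 else \sum_x nu x * ext_pt x i * ext_pt x j.

Definition in_C {R : realFieldType} (k : nat) (f : cube k -> bool)
    (z : 'M[R]_k.+1) : Prop :=
  exists nu, distr_on f nu /\ z = moment_mx nu.

Definition in_Cdelta {R : realFieldType} (k : nat) (f : cube k -> bool)
    (delta : R) (z : 'M[R]_k.+1) : Prop :=
  exists z0, in_C f z0 /\ z = (1 - delta) *: z0 + delta *: 1%:M.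

(* zeta_{S,pi,b}: S listed in increasing order s_1 < ... < s_m (enum_val),
   index i in 1..m refers to coordinate pi(s_i); entries multiplied by
   (1 b)(1 b)^T. *)
Definition sub_index (k : nat) (S : {set 'I_k}) (pi : {perm 'I_k})
    (i : 'I_#|S|.+1) : 'I_k.+1 :=
  match unlift ord0 i with
  | None => ord0
  | Some j => lift ord0 (pi (enum_val j))
  end.

Definition bvec {R : nzRingType} (k : nat) (S : {set 'I_k})
    (b : {ffun 'I_#|S| -> bool}) (i : 'I_#|S|.+1) : R :=
  match unlift ord0 i with None => 1 | Some j => sgnb (b j) end.

Definition zeta_sub {R : realFieldType} (k : nat) (z : 'M[R]_k.+1)
    (S : {set 'I_k}) (pi : {perm 'I_k}) (b : {ffun 'I_#|S| -> bool})
    : 'M[R]_#|S|.+1 :=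
  \matrix_(i, j) (z (sub_index pi i) (sub_index pi j) * bvec b i * bvec b j).

Definition cov_mx {R : nzRingType} (m : nat) (z' : 'M[R]_m.+1) : 'M[R]_m :=
  \matrix_(i, j) (z' (lift ord0 i) (lift ord0 j)
                  - z' ord0 (lift ord0 i) * z' ord0 (lift ord0 j)).

Definition psd {R : realFieldType} (m : nat) (A : 'M[R]_m) : Prop :=
  A^T = A /\ forall v : 'rV[R]_m, 0 <= (v *m A *m v^T) 0 0.

From HB Require Import structures.
From mathcomp Require Import all_boot all_order all_algebra all_fingroup.
From mathcomp Require Import ring lra.
Import Order.TTheory GRing.Theory Num.Theory.
Local Open Scope ring_scope.
Set Implicit Arguments. Unset Strict Implicit. Unset Printing Implicit Defensive.

(* Write zeta = (1 - delta) zeta(nu) + delta I and let y(x) in {-1,1}^|S|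
   collect the coordinates of x selected by S, permuted by pi and flipped by b.
   With x drawn from nu, the covariance matrix of zeta_{S,pi,b} is
     Sigma = (1 - delta) E[y^T y] + delta I - (1 - delta)^2 E[y]^T E[y].
   For a row vector v, with W := y v^T, the quadratic form is
     v Sigma v^T = (1 - delta) E[W^2] - (1 - delta)^2 E[W]^2 + delta |v|^2,
   and E[W]^2 <= E[W^2] makes the first two terms nonnegative, so
   v Sigma v^T >= delta |v|^2.  This gives positive semidefiniteness and the
   lower bound delta on every eigenvalue. *)

Lemma sqr_wmean_le_wmean_sqr (R : realFieldType) (T : finType) (nu W : T -> R) :
  (forall x, 0 <= nu x) -> \sum_x nu x = 1 ->
  (\sum_x nu x * W x) ^+ 2 <= \sum_x nu x * W x ^+ 2.
Proof.
move=> nu_ge0 nu_sum1; set mu := \sum_x nu x * W x.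
have var_ge0 : 0 <= \sum_x nu x * (W x - mu) ^+ 2.
  by apply: sumr_ge0 => x _; rewrite mulr_ge0 ?sqr_ge0.
have var_expand :
    \sum_x nu x * (W x - mu) ^+ 2 = \sum_x nu x * W x ^+ 2 - mu ^+ 2.
  transitivity (\sum_x (nu x * W x ^+ 2 - 2 * mu * (nu x * W x) + mu ^+ 2 * nu x)).
    by apply: eq_bigr => x _; ring.
  by rewrite big_split sumrB -!mulr_sumr nu_sum1 -/mu /=; ring.
by move: var_ge0; rewrite var_expand subr_ge0.
Qed.

Section QuadraticForm.

Variables (R : realFieldType) (m : nat).
Implicit Types (u v : 'rV[R]_m).

Lemma mx11_mul_tr (w : 'M[R]_1) : (w *m w^T) 0 0 = w 0 0 ^+ 2.
Proof. by rewrite mxE big_ord1 mxE expr2. Qed.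

Lemma quad_outer v u : (v *m (u^T *m u) *m v^T) 0 0 = ((v *m u^T) 0 0) ^+ 2.
Proof. by rewrite !mulmxA -(mulmxA _ u) -[u *m v^T]trmxK trmx_mul trmxK mx11_mul_tr. Qed.

Lemma sqr_normE v : (v *m v^T) 0 0 = \sum_i v 0 i ^+ 2.
Proof. by rewrite mxE; apply: eq_bigr => i _; rewrite mxE expr2. Qed.

Lemma sqr_norm_ge0 v : 0 <= (v *m v^T) 0 0.
Proof. by rewrite sqr_normE sumr_ge0 // => i _; rewrite sqr_ge0. Qed.

Lemma sqr_norm_gt0 v : v != 0 -> 0 < (v *m v^T) 0 0.
Proof.
move=> v_neq0; rewrite lt_def sqr_norm_ge0 andbT sqr_normE.
apply: contra v_neq0 => /eqP sum0; apply/eqP/matrixP => r i.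
rewrite (ord1 r) mxE; apply/eqP; rewrite -sqrf_eq0; apply/eqP.
exact: (psumr_eq0P (fun i _ => sqr_ge0 (v 0 i)) sum0).
Qed.

Variables (A : 'M[R]_m) (d : R).
Hypothesis quad_ge : forall v, d * (v *m v^T) 0 0 <= (v *m A *m v^T) 0 0.

Lemma psd_of_quad_ge : A^T = A -> 0 <= d -> psd A.
Proof.
move=> symA d_ge0; split=> // v; apply: le_trans (quad_ge v).
by rewrite mulr_ge0 ?sqr_norm_ge0.
Qed.

Lemma eigenvalue_ge_of_quad_ge a : eigenvalue A a -> d <= a.
Proof.
case/eigenvalueP=> v Av v_neq0; have := quad_ge v.
by rewrite Av -scalemxAl [in X in _ <= X]mxE ler_pM2r ?sqr_norm_gt0.
Qed.

End QuadraticForm.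

Lemma tr_mul_rowE (R : pzSemiRingType) n (u : 'rV[R]_n) i j :
  (u^T *m u) i j = u 0 i * u 0 j.
Proof. by rewrite mxE big_ord1 !mxE. Qed.

Lemma sgnb_sqr (R : nzRingType) (c : bool) : sgnb c * sgnb c = 1 :> R.
Proof. by case: c; rewrite /sgnb ?mulrNN mulr1. Qed.

Lemma ext_pt_sqr (R : nzRingType) k (x : cube k) i : ext_pt x i * ext_pt x i = 1 :> R.
Proof. by rewrite /ext_pt; case: unlift => [j|]; rewrite ?sgnb_sqr ?mulr1. Qed.

Lemma ext_pt0 (R : nzRingType) k (x : cube k) : ext_pt x ord0 = 1 :> R.
Proof. by rewrite /ext_pt unlift_none. Qed.

Section SmoothedMoments.

Variables (R : realFieldType) (k : nat) (f : cube k -> bool).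
Variables (nu : {ffun cube k -> R}) (d : R).
Hypothesis nu_distr : distr_on f nu.

Lemma smoothed_moment_mxE r s :
  ((1 - d) *: moment_mx nu + d *: 1%:M) r s
  = (1 - d) * \sum_x nu x * ext_pt x r * ext_pt x s + d * (r == s)%:R.
Proof.
have [_ [nu_sum1 _]] := nu_distr.
rewrite !mxE; case: eqP => [<-|//]; congr (_ * _ + _).
by rewrite -nu_sum1; apply: eq_bigr => x _; rewrite -mulrA ext_pt_sqr mulr1.
Qed.

Variables (S : {set 'I_k}) (pi : {perm 'I_k}) (b : {ffun 'I_#|S| -> bool}).

Definition sub_pt (x : cube k) : 'rV[R]_#|S| :=
  \row_i (ext_pt x (lift ord0 (pi (enum_val i))) * sgnb (b i)).

Definition sub_mean : 'rV[R]_#|S| := \sum_x nu x *: sub_pt x.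

Let zd := zeta_sub ((1 - d) *: moment_mx nu + d *: 1%:M) pi b.

Lemma zeta_sub_smoothed_lift i j :
  zd (lift ord0 i) (lift ord0 j)
  = (1 - d) * \sum_x nu x * sub_pt x 0 i * sub_pt x 0 j + d * (i == j)%:R.
Proof.
rewrite /zd mxE /sub_index /bvec !liftK smoothed_moment_mxE.
rewrite (inj_eq (inj_comp (inj_comp (@lift_inj _ ord0) (@perm_inj _ pi)) enum_val_inj)).
rewrite mulrDl mulrDl; congr (_ + _).
  rewrite !mulr_sumr !mulr_suml; apply: eq_bigr => x _; rewrite !mxE; ring.
by case: eqP => [->|_]; rewrite ?mulr0 ?mul0r // mulr1 -mulrA sgnb_sqr mulr1.
Qed.

Lemma zeta_sub_smoothed0 i :
  zd ord0 (lift ord0 i) = (1 - d) * \sum_x nu x * sub_pt x 0 i.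
Proof.
rewrite /zd mxE /sub_index /bvec !liftK unlift_none smoothed_moment_mxE.
rewrite (negbTE (neq_lift _ _)) mulr0 addr0 !mulr_sumr !mulr_suml.
by apply: eq_bigr => x _; rewrite !mxE ext_pt0; ring.
Qed.

Lemma cov_mx_smoothed :
  cov_mx zd = (1 - d) *: \sum_x nu x *: ((sub_pt x)^T *m sub_pt x) + d%:M
              - (1 - d) ^+ 2 *: (sub_mean^T *m sub_mean).
Proof.
apply/matrixP => i j.
rewrite [LHS]mxE zeta_sub_smoothed_lift !zeta_sub_smoothed0.
transitivity ((1 - d) * \sum_x nu x * sub_pt x 0 i * sub_pt x 0 j + d *+ (i == j)
  - (1 - d) ^+ 2 * ((\sum_x nu x * sub_pt x 0 i) * \sum_x nu x * sub_pt x 0 j)).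
  by rewrite mulr_natr; ring.
rewrite !mxE !summxE big_ord1 !mxE !summxE.
congr (_ * _ + _ - _ * (_ * _)); apply: eq_bigr => x _; rewrite !mxE ?big_ord1 ?mxE; ring.
Qed.

Lemma cov_mx_smoothed_sym : (cov_mx zd)^T = cov_mx zd.
Proof.
rewrite cov_mx_smoothed !linearD linearN !linearZ /= linear_sum tr_scalar_mx.
rewrite trmx_mul trmxK; congr (_ *: _ + _ + _).
by apply: eq_bigr => x _; rewrite linearZ /= trmx_mul trmxK.
Qed.

Lemma cov_mx_smoothed_quad_ge : 0 <= d -> d <= 1 ->
  forall v : 'rV[R]_#|S|, d * (v *m v^T) 0 0 <= (v *m cov_mx zd *m v^T) 0 0.
Proof.
move=> d_ge0 d_le1 v; have [nu_ge0 [nu_sum1 _]] := nu_distr.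
pose W x := (v *m (sub_pt x)^T) 0 0.
have quad_second : v *m (\sum_x nu x *: ((sub_pt x)^T *m sub_pt x)) *m v^T
    = (\sum_x nu x * W x ^+ 2)%:M.
  rewrite [LHS]mx11_scalar mulmx_sumr mulmx_suml summxE; congr _%:M.
  by apply: eq_bigr => x _; rewrite -scalemxAr -scalemxAl mxE quad_outer.
have quad_mean : v *m (sub_mean^T *m sub_mean) *m v^T = ((\sum_x nu x * W x) ^+ 2)%:M.
  rewrite [LHS]mx11_scalar quad_outer linear_sum mulmx_sumr summxE; congr (_ ^+ 2)%:M.
  by apply: eq_bigr => x _; rewrite linearZ /= -scalemxAr mxE.
rewrite cov_mx_smoothed mulmxBr mulmxDr mulmxBl mulmxDl -!scalemxAr -!scalemxAl.
rewrite quad_second quad_mean mul_mx_scalar -scalemxAl !mxE /= !mulr1n.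
have := sqr_wmean_le_wmean_sqr W nu_ge0 nu_sum1.
move: (\sum_x nu x * W x ^+ 2) (\sum_x nu x * W x) => a m m2_le_a.
have : 0 <= (1 - d) * (a - m ^+ 2) by rewrite mulr_ge0 ?subr_ge0.
have : 0 <= d * (1 - d) * m ^+ 2 by rewrite mulr_ge0 ?sqr_ge0 // mulr_ge0 ?subr_ge0.
lra.
Qed.

End SmoothedMoments.

Theorem mainTheorem9 (R : realFieldType) (k : nat) (f : cube k -> bool)
  (delta : R) (z : 'M[R]_k.+1) (S : {set 'I_k}) (pi : {perm 'I_k})
  (b : {ffun 'I_#|S| -> bool}) :
  0 < delta -> delta < 1 ->
  in_Cdelta f delta z ->
  S != set0 -> perm_on S pi ->
  psd (cov_mx (zeta_sub z pi b)) /\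
  (forall a : R, eigenvalue (cov_mx (zeta_sub z pi b)) a -> delta <= a).
Proof.
move=> delta_gt0 delta_lt1 [_ [[nu [nu_distr ->]] ->]] _ _.
have quad_ge := cov_mx_smoothed_quad_ge nu_distr pi b (ltW delta_gt0) (ltW delta_lt1).
split; last exact: eigenvalue_ge_of_quad_ge quad_ge.
exact: psd_of_quad_ge quad_ge (cov_mx_smoothed_sym delta nu_distr pi b) (ltW delta_gt0).
Qed.
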